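(* Let $\mathcal T$ be a set of at least two binary trees over $L$, $\sigma$ a leaf ordering, and let $L_0,\dots,L_k$ and $m_0,\dots,m_k$ be as constructed in the context. For any $T\in\mathcal T$ and any $i\in\{0,\dots,k\}$, let $r_i$ be the root (top vertex) of the subtree $T(L_i)$. Then the subtree $T_{r_i}$ contains no leaf $l_j$ with $j<m_i$.
   Context: Trees. Fix a finite label set $L$ containing a distinguished label $\rho$, and let $n=|L\setminus\{\rho\}|$. A (planted, binary phylogenetic) tree $T$ over $L$ is a rooted tree whose top vertex is labeled $\rho$ and has exactly one child $r(T)$ (the root), in which every other non-leaf vertex has exactly two children, and whose leaves are bijectively labeled by $L\setminus\{\rho\}$; vertices are identified with their labels. For a vertex $v$, $T_v$ is the subtree rooted at $v$. For $S\subseteq L$, $T(S)$ is the smallest subtree of $T$ containing all vertices labeled by $S$, and $T|_S$ is obtained from $T(S)$ by suppressing all unlabeled vertices with fewer than two children. OLA vectors. A leaf ordering is a bijection $\sigma:L\setminus\{\rho\}\to\{0,\dots,n-1\}$; write $l_i=\sigma^{-1}(i)$. For a binary tree $T$ whose non-$\rho$ labels lie in $L\setminus\{\rho\}$ and a vertex $v\ne\rho$, let $\mu(v)=\min\{\sigma(l): l\in L(T_v)\setminus\{\rho\}\}$; each leaf $l$ gets index $\sigma(l)$, and each internal vertex $v$ (not a leaf, not $\rho$) with children $v_1,v_2$ gets index $\sigma(v):=-\max\{\mu(v_1),\mu(v_2)\}$. Let $T^i:=T|_{\{\rho,l_0,\dots,l_i\}}$. For $1\le i\le n-1$ let $v_i$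 be the sibling of $l_i$ in $T^i$, and define $OLA(T,\sigma)_i:=\sigma(v_i)$ (index computed in $T^i$). Mismatched indices. For a finite set $\mathcal T$ of at least two binary trees over $L$ and a leaf ordering $\sigma$, the set $M\subseteq\{1,\dots,n-1\}$ of mismatched indices is built by processing $i=1,\dots,n-1$ in increasing order: $i$ is put in $M$ iff either there are $T,T'\in\mathcal T$ with $OLA(T,\sigma)_i\ne OLA(T',\sigma)_i$, or all $OLA(T,\sigma)_i$ ($T\in\mathcal T$) equal a common value $-j$ with $j$ already in $M$. Construction of leaf sets. Write $M=\{m_1<\dots<m_k\}$ and set $m_0:=0$. Let $I_c=\{1,\dots,n-1\}\setminus M$; for $j\in I_c$ all vectors $OLA(T,\sigma)$ have a common value $c_j$ at index $j$. Initialize $L_0=\{\rho,l_0\}$ and $L_i=\{l_{m_i}\}$ for $1\le i\le k$. For a current set $L_i$ define $$span(L_i):=\Big(\bigcup_{l_j\in L_i\setminus\{l_{m_i},\rho\}}\{-j,j\}\Big)\cup\{m_i\}.$$ Then process the indices $j\in I_c$ in increasing order: add $l_j$ to the unique set $L_i$ for which $c_j\in span(L_i)$ (span taken with the current contents of $L_i$). The resulting sets $L_0,\dots,L_k$ partition $L$. *)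

From HB Require Import structures.
From mathcomp Require Import all_boot all_order all_algebra.
Set Implicit Arguments. Unset Strict Implicit. Unset Printing Implicit Defensive.
Import GRing.Theory Num.Theory.

(* Non-rho labels form a finite type X (so L = {rho} + X, n = #|X|).
   A planted binary phylogenetic tree is represented by the binary tree
   hanging below rho: the top vertex rho is implicit, the btree's root is r(T). *)
Inductive btree (X : Type) : Type :=
| Leaf of X
| Node of btree X & btree X.
Arguments Leaf {X} _.
Arguments Node {X} _ _.

Fixpoint btree_eqb (X : eqType) (t u : btree X) : bool :=
  match t, u with
  | Leaf x, Leaf y => x == y
  | Node a b, Node c d => btree_eqb a c && btree_eqb b d
  | _, _ => false
  end.

Lemma btree_eqP (X : eqType) : Equality.axiom (@btree_eqb X).
Proof.
elim=> [x|a IHa b IHb] [y|c d] /=; try by constructor.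
- by apply: (iffP eqP) => [->|[]].
- case: (IHa c) => [->|ne]; last by constructor=> -[].
  by case: (IHb d) => [->|ne]; constructor=> // -[].
Qed.

HB.instance Definition _ (X : eqType) := hasDecEq.Build (btree X) (@btree_eqP X).

Fixpoint leaves (X : Type) (t : btree X) : seq X :=
  match t with Leaf x => [:: x] | Node a b => leaves a ++ leaves b end.

Definition tree_over (X : finType) (t : btree X) : Prop :=
  perm_eq (leaves t) (enum X).

(* u is (the subtree T_v rooted at) a vertex v of t *)
Fixpoint is_subtree (X : Type) (u t : btree X) : Prop :=
  u = t \/ match t with Leaf _ => False | Node a b => is_subtree u a \/ is_subtree u b end.

Section Ordering.
Variables (X : finType) (sigma : X -> nat).

Definition leaf_ordering : Prop := injective sigma /\ forall x, sigma x < #|X|.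

Fixpoint mu (t : btree X) : nat :=
  match t with Leaf x => sigma x | Node a b => minn (mu a) (mu b) end.

Definition vindex (t : btree X) : int :=
  match t with
  | Leaf x => Posz (sigma x)
  | Node a b => (- Posz (maxn (mu a) (mu b)))%R
  end.

(* T|_S for S = {rho} \cup P : None if no leaf of P occurs *)
Fixpoint restrict (P : pred X) (t : btree X) : option (btree X) :=
  match t with
  | Leaf x => if P x then Some (Leaf x) else None
  | Node a b =>
      match restrict P a, restrict P b with
      | Some a', Some b' => Some (Node a' b')
      | Some a', None => Some a'
      | None, Some b' => Some b'
      | None, None => None
      end
  end.

Definition is_leaf_l (i : nat) (t : btree X) : bool :=
  match t with Leaf x => sigma x == i | Node _ _ => false end.

(* sibling of the leaf l_i (sigma l_i = i) *)
Fixpoint sibling (i : nat) (t : btree X) : option (btree X) :=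
  match t with
  | Leaf _ => None
  | Node a b =>
      if is_leaf_l i a then Some b
      else if is_leaf_l i b then Some a
      else match sibling i a with Some v => Some v | None => sibling i b end
  end.

Definition OLA (T : btree X) (i : nat) : int :=
  match restrict (fun x => sigma x <= i) T with
  | Some Ti => match sibling i Ti with Some v => vindex v | None => 0%R end
  | None => 0%R
  end.

Variable Ts : seq (btree X).

(* common value at index i (meaningful for i not mismatched) *)
Definition cval (i : nat) : int :=
  if Ts is T0 :: _ then OLA T0 i else 0%R.

(* is i mismatched, given the mismatched indices < i found so far *)
Definition mis_step (i : nat) (prev : seq nat) : bool :=
  has (fun T => has (fun T' => OLA T i != OLA T' i) Ts) Ts
  || has (fun j => cval i == (- (Posz j))%R) prev.

Fixpoint Mupto (k : nat) : seq nat :=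
  match k with
  | 0 => [::]
  | k'.+1 => let p := Mupto k' in
             if (k'.+1 < #|X|) && mis_step k'.+1 p then rcons p k'.+1 else p
  end.

(* M = {m_1 < ... < m_k} as an increasing sequence *)
Definition M : seq nat := Mupto #|X|.-1.
Definition kM : nat := size M.
(* m_0 = 0, m_i = i-th element of M *)
Definition mm (i : nat) : nat := if i is i'.+1 then nth 0 M i' else 0.

(* c \in span(L_i), where prev gives the block numbers of l_0..l_(j-1) *)
Definition in_span (i j : nat) (prev : seq nat) (c : int) : bool :=
  (c == Posz (mm i)) ||
  has (fun j' => [&& nth 0 prev j' == i, j' != 0, j' \notin M &
                     (c == (Posz j')) || (c == (- (Posz j'))%R)]) (iota 0 j).

(* block number of l_j, given the blocks of l_0..l_(j-1) *)
Definition new_block (j : nat) (prev : seq nat) : nat :=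
  if j == 0 then 0
  else if j \in M then (index j M).+1
  else find (fun i => in_span i j prev (cval j)) (iota 0 kM.+1).

Fixpoint blocks (j : nat) : seq nat :=
  match j with
  | 0 => [::]
  | j'.+1 => let p := blocks j' in rcons p (new_block j' p)
  end.

(* L_i as a predicate on labels option X (None = rho) *)
Definition Lset (i : nat) (l : option X) : bool :=
  match l with
  | None => i == 0
  | Some x => nth 0 (blocks #|X|) (sigma x) == i
  end.

End Ordering.

(* u is T_{r}, where r is the root (top vertex) of T(S), S a set of labels
   (None = rho).  If rho \in S then r = rho and T_rho is the whole tree. *)
Definition top_subtree (X : finType) (T : btree X) (S : pred (option X)) (u : btree X) : Prop :=
  if S None then u = T
  else [/\ is_subtree u T,
           (forall x, S (Some x) -> x \in leaves u) &
           (match u with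
            | Leaf _ => True
            | Node a b => ~ (forall x, S (Some x) -> x \in leaves a) /\
                          ~ (forall x, S (Some x) -> x \in leaves b)
            end)].

From mathcomp Require Import all_boot all_order all_algebra zify.
Set Implicit Arguments. Unset Strict Implicit. Unset Printing Implicit Defensive.
Import GRing.Theory.

(* Fix i > 0 and write m = m_i.  Going through the leaves of L_i in increasing
   index order, we grow a vertex w of T whose subtree contains the leaves of L_i
   seen so far but no leaf of index < m; initially w = l_m.  Let l_j be the next
   leaf of L_i not yet below w.  As j is not mismatched, the sibling v of l_j in
   T^j has its index in span(L_i): v contains an earlier leaf y of L_i and, if v
   is internal, y realises max(mu(v_1), mu(v_2)).  Since y and l_m both lie
   below w, this forces all of v below w, so the parent of v in T, whose other
   leaves have index >= j, is the next w.  Finally T_w contains L_i, and the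
   minimality of r_i puts T_(r_i) inside T_w. *)

Section Subtrees.
Variable X : eqType.
Implicit Types (t u w : btree X).

Lemma subtree_refl t : is_subtree t t.
Proof. by case: t => *; left. Qed.

Lemma subtree_trans u w t : is_subtree u w -> is_subtree w t -> is_subtree u t.
Proof.
move=> uw; elim: t => [x|a IHa b IHb] [<-|wt] //.
by case: wt => [/IHa|/IHb]; [right; left | right; right].
Qed.

Lemma subtree_leaves u t : is_subtree u t -> {subset leaves u <= leaves t}.
Proof.
elim: t => [x|a IHa b IHb] /=; first by case=> // ->.
by case=> [->|[/IHa|/IHb]] // sub y /sub; rewrite mem_cat => ->; rewrite ?orbT.
Qed.

Lemma subtree_uniq u t : is_subtree u t -> uniq (leaves t) -> uniq (leaves u).
Proof.
elim: t => [x|a IHa b IHb] /=; first by case=> // ->.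
by case=> [->|[/IHa|/IHb]] // IH; rewrite cat_uniq => /and3P[? _ ?]; apply: IH.
Qed.

Lemma leaf_subtree x t : x \in leaves t -> is_subtree (Leaf x) t.
Proof.
elim: t => [y|a IHa b IHb] /=; first by rewrite inE => /eqP ->; left.
by rewrite mem_cat => /orP[/IHa|/IHb]; [right; left | right; right].
Qed.

Lemma subtree_nested u w t y : uniq (leaves t) -> is_subtree u t -> is_subtree w t ->
  y \in leaves u -> y \in leaves w -> is_subtree u w \/ is_subtree w u.
Proof.
elim: t => [x|a IHa b IHb].
  by move=> _ [->|[]] [->|[]] _ _; left; apply: subtree_refl.
rewrite /= cat_uniq => /and3P[ua /hasPn dis ub].
have apart u' w' : is_subtree u' a -> is_subtree w' b -> y \in leaves u' ->
    y \in leaves w' -> False.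
  move=> /subtree_leaves ua' /subtree_leaves wb' /ua' ya /wb' yb.
  by have := dis y yb; rewrite ya.
case=> [->|[ua'|ub']] [->|[wa|wb]] yu yw.
- by left; left.
- by right; right; left.
- by right; right; right.
- by left; right; left.
- exact: IHa.
- by case: (apart _ _ ua' wb yu yw).
- by left; right; right.
- by case: (apart _ _ wa ub' yw yu).
- exact: IHb.
Qed.

End Subtrees.

Section Restriction.
Variables (X : finType) (P : pred X).
Implicit Types (t : btree X).

Lemma leaves_restrict t :
  if restrict P t is Some t' then leaves t' = filter P (leaves t)
  else filter P (leaves t) = [::].
Proof.
elim: t => [x|a IHa b IHb] /=; first by case: (P x).
rewrite filter_cat.
by case: (restrict P a) IHa => [a'|] Ha; case: (restrict P b) IHb => [b'|] Hb;
  rewrite /= ?Ha ?Hb ?cats0.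
Qed.

Lemma restrict_leaves t t' : restrict P t = Some t' -> leaves t' = filter P (leaves t).
Proof. by move=> E; have := leaves_restrict t; rewrite E. Qed.

Lemma restrict_Node t t1 t2 : restrict P t = Some (Node t1 t2) ->
  exists D1 D2, [/\ is_subtree (Node D1 D2) t, restrict P D1 = Some t1
                  & restrict P D2 = Some t2].
Proof.
elim: t => [x|a IHa b IHb] /=; first by case: (P x).
case Ea: (restrict P a) => [a'|]; case Eb: (restrict P b) => [b'|] //.
- by case=> <- <-; exists a, b; split => //; left.
- rewrite -Ea => /IHa [D1 [D2 [? ? ?]]].
  by exists D1, D2; split => //; right; left.
- rewrite -Eb => /IHb [D1 [D2 [? ? ?]]].
  by exists D1, D2; split => //; right; right.
Qed.

End Restriction.

Section LeafIndices.
Variables (X : finType) (sigma : X -> nat).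
Hypothesis sigma_inj : injective sigma.
Implicit Types (t : btree X).

Lemma ordering_onto k : (forall x, sigma x < #|X|) -> k < #|X| -> exists x, sigma x = k.
Proof.
move=> bnd kn; pose f x : 'I_#|X| := Ordinal (bnd x).
have f_inj : injective f by move=> x y [] /sigma_inj.
have := inj_card_onto f_inj (eq_leq (card_ord _)) (Ordinal kn).
by case/codomP => x [] ->; exists x.
Qed.

Lemma mu_le t y : y \in leaves t -> mu sigma t <= sigma y.
Proof.
elim: t => [x|a IHa b IHb] /=; first by rewrite inE => /eqP ->.
by rewrite mem_cat geq_min => /orP[/IHa ->|/IHb ->]; rewrite ?orbT.
Qed.

Lemma mu_leaf t : exists2 y, y \in leaves t & sigma y = mu sigma t.
Proof.
elim: t => [x|a [ya ya_a Ea] b [yb yb_b Eb]] /=; first by exists x; rewrite ?inE.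
rewrite -Ea -Eb.
case: leqP => _.
- by exists ya; rewrite ?mem_cat ?ya_a.
- by exists yb; rewrite ?mem_cat ?yb_b ?orbT.
Qed.

(* The maximum would have to be mu t2, which is realised in t2 only. *)
Lemma maxn_mu_gt t1 t2 a y : uniq (leaves t1 ++ leaves t2) ->
  a \in leaves t1 -> y \in leaves t1 -> sigma a < sigma y ->
  sigma y != maxn (mu sigma t1) (mu sigma t2).
Proof.
move=> U a1 y1 ay; apply/eqP; case: leqP => _ ymax; last by have := mu_le a1; lia.
have [y' y'2] := mu_leaf t2; rewrite -ymax => /sigma_inj y'y; subst y'.
by move: U; rewrite cat_uniq => /and3P[_ /hasPn /(_ _ y'2)]; rewrite y1.
Qed.

(* Otherwise w lies inside one child of the vertex carrying v = Node v1 v2,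
   which [maxn_mu_gt] excludes. *)
Lemma restrict_leaves_sub (P : pred X) T w A v x y :
  uniq (leaves T) -> is_subtree w T -> is_subtree A T -> restrict P A = Some v ->
  x \in leaves w -> y \in leaves w -> P x -> y \in leaves v ->
  (forall v1 v2, v = Node v1 v2 ->
     sigma x < sigma y /\ sigma y = maxn (mu sigma v1) (mu sigma v2)) ->
  {subset leaves v <= leaves w}.
Proof.
move=> uT wT AT EA xw yw Px yv v_node.
have Lv := restrict_leaves EA.
have /andP[Py yA] : P y && (y \in leaves A) by rewrite -mem_filter -Lv.
have [Aw|wA] := subtree_nested uT AT wT yA yw.
  by move=> q; rewrite Lv mem_filter => /andP[_ /(subtree_leaves Aw)].
have xv : x \in leaves v by rewrite Lv mem_filter Px (subtree_leaves wA).
have uv : uniq (leaves v) by rewrite Lv filter_uniq // (subtree_uniq AT uT).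
case: v EA yv xv uv v_node {Lv} => [y0|v1 v2] EA yv xv uv v_node.
  by move=> q; rewrite /= !inE in yv * => /eqP ->; rewrite -(eqP yv).
have [xy ymax] := v_node _ _ erefl.
have [D1 [D2 [DA E1 E2]]] := restrict_Node EA.
have in_v q D t : restrict P D = Some t -> q \in leaves D -> P q -> q \in leaves t.
  by move=> /restrict_leaves -> qD Pq; rewrite mem_filter Pq.
have vD : {subset leaves (Node v1 v2) <= leaves (Node D1 D2)}.
  move=> q; rewrite /= !mem_cat (restrict_leaves E1) (restrict_leaves E2) !mem_filter.
  by case/orP=> /andP[_ ->]; rewrite ?orbT.
have [Dw|] := subtree_nested uT (subtree_trans DA AT) wT (vD _ xv) xw.
  by move=> q /vD /(subtree_leaves Dw).
case=> [->|[wD|wD]]; first exact: vD.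
- have := maxn_mu_gt uv (in_v _ _ _ E1 (subtree_leaves wD xw) Px)
    (in_v _ _ _ E1 (subtree_leaves wD yw) Py) xy.
  by rewrite ymax eqxx.
- have uv' : uniq (leaves v2 ++ leaves v1) by rewrite uniq_catC.
  have := maxn_mu_gt uv' (in_v _ _ _ E2 (subtree_leaves wD xw) Px)
    (in_v _ _ _ E2 (subtree_leaves wD yw) Py) xy.
  by rewrite ymax maxnC eqxx.
Qed.

Lemma is_leaf_lP k t : is_leaf_l sigma k t -> exists2 x, t = Leaf x & sigma x = k.
Proof. by case: t => // x /eqP <-; exists x. Qed.

Lemma sibling_restrict (P : pred X) k t t' v :
  restrict P t = Some t' -> sibling sigma k t' = Some v ->
  exists N A C x, [/\ is_subtree N t, N = Node A C \/ N = Node C A,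
    restrict P A = Some v, restrict P C = Some (Leaf x) & sigma x = k].
Proof.
elim: t t' => [y|a IHa b IHb] t' /=; first by case: (P y) => // -[<-].
case Ea: (restrict P a) => [a'|]; case Eb: (restrict P b) => [b'|] // [<-] /=.
- case: ifP => [/is_leaf_lP [x Ex xk] [Ev]|_].
    exists (Node a b), b, a, x; rewrite -Ex -Ev; split => //; [by left | by right].
  case: ifP => [/is_leaf_lP [x Ex xk] [Ev]|_].
    exists (Node a b), a, b, x; rewrite -Ex -Ev; split => //; by left.
  case Es: (sibling sigma k a') => [va|].
    case=> Ev; rewrite Ev in Es; have [N [A [C [x [? ? ? ? ?]]]]] := IHa _ Ea Es.
    by exists N, A, C, x; split => //; right; left.
  move=> /(IHb _ Eb) [N [A [C [x [? ? ? ? ?]]]]].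
  by exists N, A, C, x; split => //; right; right.
- move=> /(IHa _ Ea) [N [A [C [x [? ? ? ? ?]]]]].
  by exists N, A, C, x; split => //; right; left.
- move=> /(IHb _ Eb) [N [A [C [x [? ? ? ? ?]]]]].
  by exists N, A, C, x; split => //; right; right.
Qed.

End LeafIndices.

Section Blocks.
Variables (X : finType) (sigma : X -> nat) (Ts : seq (btree X)).
Local Notation n := #|X|.
Local Notation Mupto := (Mupto sigma Ts).
Local Notation M := (M sigma Ts).
Local Notation blocks := (blocks sigma Ts).

Lemma Mupto_mem k j : j \in Mupto k -> [&& 0 < j, j <= k & j < n].
Proof.
elim: k => [|k IH] //=.
case: ifP => [/andP[kn _]|_]; last by move/IH => /and3P[-> /leqW -> ->].
by rewrite mem_rcons inE => /orP[/eqP ->|/IH /and3P[-> /leqW -> ->]]; rewrite ?leqnn.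
Qed.

Lemma Mupto_uniq k : uniq (Mupto k).
Proof.
elim: k => [|k IH] //=; case: ifP => // _.
by rewrite rcons_uniq IH andbT; apply/negP => /Mupto_mem /and3P[_]; rewrite ltnn.
Qed.

Lemma Mupto_mono j k : j <= k -> {subset Mupto j <= Mupto k}.
Proof.
elim: k => [|k IH]; first by rewrite leqn0 => /eqP ->.
rewrite leq_eqVlt => /orP[/eqP -> //|/IH sub] x /sub xk /=.
by case: ifP => // _; rewrite mem_rcons inE xk orbT.
Qed.

Lemma M_mem j : j \in M -> 0 < j < n.
Proof. by move=> /Mupto_mem /and3P[-> _ ->]. Qed.

Lemma notin_M j : 0 < j < n -> j \notin M -> ~~ mis_step sigma Ts j (Mupto j.-1).
Proof.
case: j => // j /= jn; apply: contra => mis.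
apply: (Mupto_mono (j := j.+1)); first by rewrite -ltnS (ltn_predK jn).
by rewrite /= jn mis mem_rcons mem_head.
Qed.

Lemma blocks_size k : size (blocks k) = k.
Proof. by elim: k => //= k IH; rewrite size_rcons IH. Qed.

Lemma nth_blocks k j : j < k -> nth 0 (blocks k) j = new_block sigma Ts j (blocks j).
Proof.
elim: k => // k IH; rewrite ltnS leq_eqVlt => /orP[/eqP ->|jk] /=;
  by rewrite nth_rcons blocks_size ?ltnn ?eqxx // jk IH.
Qed.

End Blocks.

Section FixedBlock.
Variables (X : finType) (sigma : X -> nat) (Ts : seq (btree X)).
Hypothesis sigma_inj : injective sigma.
Hypothesis sigma_lt : forall x, sigma x < #|X|.
Variable i : nat.
Hypothesis i_gt0 : 0 < i.
Hypothesis i_le : i <= kM sigma Ts.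
Local Notation n := #|X|.
Local Notation M := (M sigma Ts).
Local Notation m := (mm sigma Ts i).
Local Notation B j := (nth 0 (blocks sigma Ts n) j).

Lemma m_in_M : m \in M.
Proof. by rewrite /mm; case: i i_gt0 i_le => // i' _; apply: mem_nth. Qed.

Lemma m_gt0 : 0 < m.
Proof. by have /andP[] := M_mem m_in_M. Qed.

Lemma m_lt : m < n.
Proof. by have /andP[] := M_mem m_in_M. Qed.

Lemma block_m : B m = i.
Proof.
rewrite nth_blocks ?m_lt // /new_block (negbTE (lt0n_neq0 m_gt0)) m_in_M.
rewrite /mm; case: i i_gt0 i_le => // i' _ i'k.
by rewrite index_uniq ?Mupto_uniq.
Qed.

Lemma new_block_eqi j prev : new_block sigma Ts j prev = i ->
  [/\ j != 0, j \in M -> j = m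
    & j \notin M -> in_span sigma Ts i j prev (cval sigma Ts j)].
Proof.
rewrite /new_block; case: eqP => [_ E|_]; first by move: i_gt0; rewrite -E.
case: ifP => jM E; split => // _; first by rewrite /mm -E /= nth_index.
set s := iota 0 (kM sigma Ts).+1.
have : find (fun i => in_span sigma Ts i j prev (cval sigma Ts j)) s < size s.
  by rewrite size_iota E ltnS.
by rewrite -has_find => /(nth_find 0); rewrite E nth_iota.
Qed.

(* A positive OLA value is the label of a leaf of T^j. *)
Lemma cval_le j k : cval sigma Ts j = Posz k -> 0 < k -> k <= j.
Proof.
rewrite /cval /OLA; case: Ts => [[<-] //|T0 _].
case E: (restrict _ T0) => [Ti|]; last by case=> <-.
case Es: (sibling sigma j Ti) => [[y|a b]|] /=; [|lia|by case=> <-].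
case=> <- _; have [_ [A [_ [_ [_ _ EA _ _]]]]] := sibling_restrict E Es.
have : y \in leaves (Leaf y) by rewrite inE.
by rewrite (restrict_leaves EA) mem_filter => /andP[].
Qed.

Lemma block_ge j : B j = i -> m <= j.
Proof.
elim/ltn_ind: j => j IH Bj.
have jn : j < n.
  rewrite ltnNge; apply: contra_eqN Bj => nj.
  by rewrite nth_default ?blocks_size // eq_sym lt0n_neq0.
move: Bj; rewrite nth_blocks // => /new_block_eqi [_ jm jspan].
have [/jm -> //|/jspan] := boolP (j \in M).
case/orP=> [/eqP/cval_le -> //|]; first exact: m_gt0.
case/hasP => j' + /and4P[Bj' _ _ _]; rewrite mem_iota add0n => j'j.
apply: leq_trans (ltnW j'j); apply: IH => //.
by rewrite -(eqP Bj') (nth_blocks _ _ j'j) nth_blocks // (ltn_trans j'j).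
Qed.

Lemma OLA_cval T j : T \in Ts -> 0 < j < n -> j \notin M ->
  OLA sigma T j = cval sigma Ts j.
Proof.
move=> TT jn /(notin_M jn); rewrite /mis_step negb_or => /andP[+ _].
rewrite /cval; case: Ts TT => // T0 s TT agree.
apply/eqP; apply: contraNT agree => ne; apply/hasP; exists T => //.
by apply/hasP; exists T0; rewrite ?mem_head.
Qed.

Lemma span0 j prev : ~~ in_span sigma Ts i j prev 0.
Proof.
rewrite /in_span negb_or; apply/andP; split; first by have := m_gt0; lia.
by apply/hasPn => j' _; apply/negP => /and4P[_ j0 _ /orP[/eqP|/eqP]]; lia.
Qed.

Lemma span_vindex J v : J < n -> m <= J ->
  in_span sigma Ts i J.+1 (blocks sigma Ts J.+1) (vindex sigma v) ->
  exists2 y, y \in leaves v & [/\ B (sigma y) = i, sigma y <= J &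
    forall v1 v2, v = Node v1 v2 ->
      m < sigma y /\ sigma y = maxn (mu sigma v1) (mu sigma v2)].
Proof.
move=> Jn mJ; case/orP=> [/eqP|].
  case: v => [y [ym]|a b] /=; last by have := m_gt0; lia.
  by exists y; rewrite ?inE // ym block_m.
case/hasP => j' + /and4P[Bj' j'0 j'M cj']; rewrite mem_iota add0n ltnS => j'J.
have Bj : B j' = i.
  by rewrite -(eqP Bj') !nth_blocks // (leq_ltn_trans j'J Jn).
case: v cj' => [y /orP[/eqP [yj]|]|a b /orP[|/eqP]] /=; try lia.
  by exists y; rewrite ?inE // yj.
move=> /oppr_inj [mab]; have mj : m < j'.
  rewrite ltn_neqAle block_ge // andbT; apply: contraNneq j'M => <-; exact: m_in_M.
have [y yl yj] : exists2 y, y \in leaves (Node a b) & sigma y = j'.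
  case: leqP mab => _ <-.
  - by have [y yb <-] := mu_leaf sigma b; exists y; rewrite // mem_cat yb orbT.
  - by have [y ya <-] := mu_leaf sigma a; exists y; rewrite // mem_cat ya.
by exists y; rewrite // yj; split=> // _ _ [<- <-].
Qed.

Section Cover.
Variable T : btree X.
Hypothesis T_in : T \in Ts.
Hypothesis T_over : tree_over T.

Let uniq_T : uniq (leaves T).
Proof. by rewrite (perm_uniq T_over) enum_uniq. Qed.

Definition block_cover d w :=
  [/\ is_subtree w T, forall y, y \in leaves w -> m <= sigma y
  & forall x, B (sigma x) = i -> sigma x <= m + d -> x \in leaves w].

Lemma block_cover0 : exists w, block_cover 0 w.
Proof.
have [xm xmm] := ordering_onto sigma_inj sigma_lt m_lt.
exists (Leaf xm); split.
- by apply: leaf_subtree; rewrite (perm_mem T_over) mem_enum.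
- by move=> y; rewrite inE => /eqP ->; rewrite xmm.
- move=> x /block_ge mx; rewrite addn0 => xm'.
  by rewrite inE; apply/eqP/sigma_inj; rewrite xmm; apply/eqP; rewrite eqn_leq xm'.
Qed.

Lemma next_leaf_sibling J z : m <= J -> B (sigma z) = i -> sigma z = J.+1 ->
  exists N A C v, [/\ is_subtree N T, N = Node A C \/ N = Node C A,
    restrict (fun x => sigma x <= J.+1) A = Some v,
    restrict (fun x => sigma x <= J.+1) C = Some (Leaf z)
  & exists2 y, y \in leaves v & [/\ B (sigma y) = i, sigma y <= J &
       forall v1 v2, v = Node v1 v2 ->
         m < sigma y /\ sigma y = maxn (mu sigma v1) (mu sigma v2)]].
Proof.
move=> mJ Bz zJ; have Jn : J.+1 < n by rewrite -zJ.
have /new_block_eqi [_ Jm Jspan] : new_block sigma Ts J.+1 (blocks sigma Ts J.+1) = i.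
  by rewrite -(nth_blocks _ _ Jn) -zJ.
have JM : J.+1 \notin M by apply/negP => /Jm Jeq; move: mJ; rewrite -Jeq ltnn.
move: (Jspan JM); rewrite -(OLA_cval T_in _ JM) ?Jn // /OLA.
case ER: (restrict _ T) => [Ti|]; last by rewrite (negbTE (span0 _ _)).
case ES: (sibling sigma J.+1 Ti) => [v|]; last by rewrite (negbTE (span0 _ _)).
move=> /(span_vindex (ltnW Jn) mJ) y_span.
have [N [A [C [x [NT NAC EA EC xJ]]]]] := sibling_restrict ER ES.
have -> : z = x by apply: sigma_inj; rewrite xJ zJ.
by exists N, A, C, v.
Qed.

Lemma block_cover_step d w : block_cover d w -> exists w', block_cover d.+1 w'.
Proof.
move=> [wT w_ge w_L]; set J := m + d; have mJ : m <= J := leq_addr d m.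
case: (boolP [exists z, [&& B (sigma z) == i, sigma z == J.+1 & z \notin leaves w]]);
  last first.
  move=> /existsPn none; exists w; split => // x Bx; rewrite addnS leq_eqVlt ltnS.
  case/orP=> [/eqP xJ|]; last exact: w_L.
  by move: (none x); rewrite Bx xJ !eqxx /= negbK.
case/existsP => z /and3P[/eqP Bz /eqP zJ zw].
have [N [A [C [v [NT NAC EA EC [y yv [By yJ v_node]]]]]]] := next_leaf_sibling mJ Bz zJ.
set P := fun x => sigma x <= J.+1 in EA EC.
have leavesN q : q \in leaves N = (q \in leaves A) || (q \in leaves C).
  by case: NAC => -> /=; rewrite mem_cat // orbC.
have AT : is_subtree A T.
  by apply: subtree_trans NT; case: NAC => ->; right; [left|right]; apply: subtree_refl.
have C_ge q : q \in leaves C -> m <= sigma q.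
  move=> qC; case: (leqP (sigma q) J.+1) => [Pq|/ltnW]; last exact/leq_trans/leqW.
  have : q \in leaves (Leaf z) by rewrite (restrict_leaves EC) mem_filter /P Pq.
  by rewrite inE => /eqP ->; rewrite zJ leqW.
have zC : z \in leaves C.
  have : z \in leaves (Leaf z) by rewrite inE.
  by rewrite (restrict_leaves EC) mem_filter => /andP[].
have /andP[Py yA] : P y && (y \in leaves A) by rewrite -mem_filter -(restrict_leaves EA).
have yw : y \in leaves w by exact: w_L By yJ.
have [xm xmm] := ordering_onto sigma_inj sigma_lt m_lt.
have xmw : xm \in leaves w by apply: w_L; rewrite xmm ?block_m ?leq_addr.
have Pxm : P xm by rewrite /P xmm leqW.
have xm_node v1 v2 : v = Node v1 v2 ->
    sigma xm < sigma y /\ sigma y = maxn (mu sigma v1) (mu sigma v2).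
  by rewrite xmm; apply: v_node.
have v_w := restrict_leaves_sub sigma_inj uniq_T wT AT EA xmw yw Pxm yv xm_node.
have A_ge q : q \in leaves A -> m <= sigma q.
  move=> qA; rewrite leqNgt; apply/negP => qm.
  have : q \in leaves v.
    by rewrite (restrict_leaves EA) mem_filter qA andbT /P leqW // (leq_trans (ltnW qm)).
  by move/v_w/w_ge; rewrite leqNgt qm.
have wN : is_subtree w N.
  have yN : y \in leaves N by rewrite leavesN yA.
  have [//|Nw] := subtree_nested uniq_T wT NT yw yN.
  by move: zw; rewrite (subtree_leaves Nw) // leavesN zC orbT.
exists N; split => // [q|x' Bx'].
  by rewrite leavesN => /orP[/A_ge|/C_ge].
rewrite addnS leq_eqVlt ltnS => /orP[/eqP x'J|/(w_L _ Bx')/(subtree_leaves wN) //].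
by rewrite (sigma_inj (etrans x'J (esym zJ))) leavesN zC orbT.
Qed.

Lemma block_cover_exists d : exists w, block_cover d w.
Proof. by elim: d => [|d [w /block_cover_step]] //; exact: block_cover0. Qed.

Lemma top_subtree_ge u : top_subtree T (Lset sigma Ts i) u ->
  forall x, x \in leaves u -> m <= sigma x.
Proof.
rewrite /top_subtree /= (negbTE (lt0n_neq0 i_gt0)) => -[uT u_L u_min].
have [w [wT w_ge w_L]] := block_cover_exists n.
have w_L' x : B (sigma x) = i -> x \in leaves w.
  by move=> Bx; apply: w_L Bx _; rewrite ltnW // ltn_addl.
suff uw : is_subtree u w by move=> x /(subtree_leaves uw) /w_ge.
have [xm xmm] := ordering_onto sigma_inj sigma_lt m_lt.
have Bxm : B (sigma xm) = i by rewrite xmm block_m.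
have xmu : xm \in leaves u by apply: u_L; rewrite /= Bxm.
have [//|] := subtree_nested uniq_T uT wT xmu (w_L' _ Bxm).
case: u u_min {uT u_L xmu} => [y _ [<-|[]]|a b [Na Nb] [<-|[wa|wb]]];
  try exact: subtree_refl; exfalso.
- by apply: Na => x /eqP /w_L' /(subtree_leaves wa).
- by apply: Nb => x /eqP /w_L' /(subtree_leaves wb).
Qed.

End Cover.

End FixedBlock.

Theorem lemma4 (X : finType) (sigma : X -> nat) (Ts : seq (btree X)) :
  leaf_ordering sigma ->
  uniq Ts -> 2 <= size Ts -> (forall T, T \in Ts -> tree_over T) ->
  forall T, T \in Ts ->
  forall i, i <= kM sigma Ts ->
  forall u, top_subtree T (Lset sigma Ts i) u ->
  forall x, x \in leaves u -> mm sigma Ts i <= sigma x.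
Proof.
move=> [sigma_inj sigma_lt] _ _ T_over T T_in i i_le u.
case: (posnP i) => [-> // | i_gt0].
exact: (top_subtree_ge sigma_inj sigma_lt i_gt0 i_le T_in (T_over T T_in)).
Qed.
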